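(* Let $(\mathcal S,\mathcal A,P,r)$ be a weakly communicating MDP and let $(g^\star,h^\star)$ be a solution of the modified Bellman equations. Let $f:\mathbb R^n\to\mathbb R$ be continuous with $f(x+c\mathbf 1)=f(x)+c$ for all $x,c$. Let $h^0\in\mathbb R^n$, $\lambda_k=\frac{2}{k+2}$, and for $k\ge1$ \[h^k=\lambda_{k-1}h^0+(1-\lambda_{k-1})\big(Th^{k-1}-f(h^{k-1})\mathbf 1\big)\] (Anchored Relative Value Iteration), and let $\pi_k$ be a greedy policy, $T^{\pi_k}h^k=Th^k$. Then for $k\ge1$, \[\|g^\star-g^{\pi_k}\|_\infty\le\|Th^k-h^k-g^\star\|_\infty\le\frac{8}{k+1}\|h^0-h^\star\|_\infty.\] Furthermore, if the MDP is unichain, then $h^k\to h^\infty$ and $f(h^k)\mathbf 1\to g^\star$ for some solution $(g^\star,h^\infty)$ of the modified Bellman equations.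
   Context: An MDP $(\mathcal S,\mathcal A,P,r)$ has finite state space $\mathcal S$ ($|\mathcal S|=n$, functions identified with $\mathbb R^n$), finite action space, transition probabilities $P(s'\mid s,a)$ and bounded reward $r$. For a policy $\pi$: $r^\pi(s)=\sum_a\pi(a\mid s)r(s,a)$, $\mathcal P^\pi(s,s')=\sum_a\pi(a\mid s)P(s'\mid s,a)$, $g^\pi(s)=\liminf_{T\to\infty}\frac1T\mathbb E_\pi[\sum_{t=0}^{T-1}r(s_t,a_t)\mid s_0=s]$, $g^\star=\max_\pi g^\pi$. $T^\pi V=r^\pi+\mathcal P^\pi V$, $(TV)(s)=\max_a\{r(s,a)+\sum_{s'}P(s'\mid s,a)V(s')\}$, $\mathbf 1$ the all-ones vector. A pair $(g,h)$ solves the modified Bellman equations if $\max_a\sum_{s'}P(s'\mid s,a)g(s')=g(s)$ and $\max_a\{r(s,a)+\sum_{s'}P(s'\mid s,a)h(s')\}=h(s)+g(s)$ for all $s$, with some policy attaining both maxima simultaneously; the first component of any solution equals $g^\star$. Weakly communicating: there is a closed set of states each accessible from every other in it under some deterministic policy, plus a possibly empty set transient under every policy. Unichain: every deterministic policy induces a chain with a single irreducible recurrent class plus possibly transient states. *)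

From mathcomp Require Import all_boot all_order all_algebra.
From mathcomp Require Import all_classical all_reals all_analysis.
Set Implicit Arguments. Unset Strict Implicit. Unset Printing Implicit Defensive.
Import Order.TTheory GRing.Theory Num.Theory.
Local Open Scope ring_scope.

Section MDP.
Variables (R : realType) (S A : finType).

Definition is_kernel (P : S -> A -> S -> R) : Prop :=
  (forall s a s', 0 <= P s a s') /\ (forall s a, \sum_(s' : S) P s a s' = 1).

Definition is_policy (pi : S -> A -> R) : Prop :=
  (forall s a, 0 <= pi s a) /\ (forall s, \sum_(a : A) pi s a = 1).

Definition amax (F : A -> R) : R :=
  match [pick a : A] with
  | Some a0 => \big[Num.max/F a0]_(a : A) F a
  | None => 0
  end.

Definition supnorm (x : S -> R) : R := \big[Num.max/0]_(s : S) `|x s|.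

Variables (P : S -> A -> S -> R) (r : S -> A -> R).

Definition qval (V : S -> R) (s : S) (a : A) : R :=
  r s a + \sum_(s' : S) P s a s' * V s'.

Definition Tb (V : S -> R) : S -> R := fun s => amax (qval V s).

Definition rpi (pi : S -> A -> R) (s : S) : R := \sum_(a : A) pi s a * r s a.
Definition Ppi (pi : S -> A -> R) (s s' : S) : R := \sum_(a : A) pi s a * P s a s'.
Definition Tpi (pi : S -> A -> R) (V : S -> R) : S -> R :=
  fun s => rpi pi s + \sum_(s' : S) Ppi pi s s' * V s'.

Definition detpol (d : S -> A) : S -> A -> R :=
  fun s a => if a == d s then 1 else 0.

Fixpoint mpow (M : S -> S -> R) (t : nat) : S -> S -> R :=
  match t with
  | 0 => fun s s' => if s == s' then 1 else 0
  | t'.+1 => fun s s' => \sum_(u : S) M s u * mpow M t' u s'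
  end.

(* E_pi [ sum_{t<T} r(s_t,a_t) | s_0 = s ] *)
Definition exp_return (pi : S -> A -> R) (T : nat) (s : S) : R :=
  \sum_(t < T) \sum_(s' : S) mpow (Ppi pi) t s s' * rpi pi s'.

Definition gain (pi : S -> A -> R) (s : S) : R :=
  limn_inf (fun T : nat => (T%:R)^-1 * exp_return pi T s).

Definition accessible (M : S -> S -> R) (s s' : S) : Prop :=
  exists t, 0 < mpow M t s s'.

(* s is transient in the chain M: finite expected number of visits *)
Definition transient (M : S -> S -> R) (s : S) : Prop :=
  exists B : R, forall N, \sum_(t < N) mpow M t s s <= B.

Definition recurrent (M : S -> S -> R) (s : S) : Prop := ~ transient M s.

Definition weakly_communicating : Prop :=
  exists C : {set S},
    (forall s a s', s \in C -> 0 < P s a s' -> s' \in C) /\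
    (forall s s', s \in C -> s' \in C ->
        exists d : S -> A, accessible (Ppi (detpol d)) s s') /\
    (forall s, s \notin C ->
        forall pi, is_policy pi -> transient (Ppi pi) s).

Definition unichain : Prop :=
  forall d : S -> A,
    (exists s, recurrent (Ppi (detpol d)) s) /\
    (forall s s', recurrent (Ppi (detpol d)) s -> recurrent (Ppi (detpol d)) s' ->
        accessible (Ppi (detpol d)) s s').

Definition modified_bellman (g h : S -> R) : Prop :=
  (forall s, amax (fun a => \sum_(s' : S) P s a s' * g s') = g s) /\
  (forall s, amax (qval h s) = h s + g s) /\
  (exists d : S -> A, forall s,
      \sum_(s' : S) P s (d s) s' * g s' = g s /\
      qval h s (d s) = h s + g s).

Definition lam (k : nat) : R := 2 / (k%:R + 2).

Fixpoint arvi (f : (S -> R) -> R) (h0 : S -> R) (k : nat) : S -> R :=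
  match k with
  | 0 => h0
  | k'.+1 => fun s => lam k' * h0 s
                + (1 - lam k') * (Tb (arvi f h0 k') s - f (arvi f h0 k'))
  end.

End MDP.

Definition cont_fun (R : realType) (S : finType) (f : (S -> R) -> R) : Prop :=
  forall x e, 0 < e -> exists2 d, 0 < d &
    forall y, supnorm (fun s => y s - x s) < d -> `|f y - f x| < e.

From mathcomp Require Import all_boot all_order all_algebra.
From mathcomp Require Import all_classical all_reals all_analysis.
From mathcomp Require Import ring lra.

(* The gain g* is constant: the minimum level set of g* is closed under every
   action, the maximum level set under an optimal policy, each contains a
   recurrent state of that policy, and recurrent states lie in the
   communicating class, inside which the minimum level set spreads.
   Hence ARVI differs by constant vectors from the Halpern iteration
   y_k = l_(k-1) h0 + (1 - l_(k-1)) U y_(k-1) of the nonexpansive map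
   U = T - g*, whose fixed point is h*; the anchors 2/(k+2) make the residual
   |U y_k - y_k| = |T h_k - h_k - g*| decay like 8 |h0 - h*| / (k+1), and
   telescoping the expected return of the greedy policy bounds its gain error
   by the same residual.  In the unichain case a small residual forces
   y_k - h* to have small span (else a threshold policy would have two
   disjoint closed sets), so y_k - h* approaches constants whose increments
   vanish, and continuity and translation equivariance of f give the limits. *)

Set Implicit Arguments.
Unset Strict Implicit.
Unset Printing Implicit Defensive.
Import Order.TTheory GRing.Theory Num.Theory.
Local Open Scope ring_scope.
Local Open Scope classical_set_scope.

Section FiniteMax.
Variables (R : realType) (S A : finType).

Lemma supnorm_ge0 (x : S -> R) : 0 <= supnorm x.
Proof. by apply: bigmax_ge_id. Qed.

Lemma ler_supnorm (x : S -> R) s : `|x s| <= supnorm x.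
Proof. exact: (le_bigmax 0 (fun s => `|x s|) s). Qed.

Lemma supnorm_le (x : S -> R) B :
  0 <= B -> (forall s, `|x s| <= B) -> supnorm x <= B.
Proof. by move=> B0 xB; apply: bigmax_le. Qed.

Lemma le_amax (F : A -> R) a : F a <= amax F.
Proof.
rewrite /amax; case: pickP => [a0 _|/(_ a)//].
exact: (le_bigmax (F a0) F a).
Qed.

(* The witness [a] excludes an empty action type, on which [amax] is 0. *)
Lemma amax_attained (F : A -> R) (a : A) : exists a', amax F = F a'.
Proof.
rewrite /amax; case: pickP => [a0 _|/(_ a)//].
elim/big_ind: _ => [|x y [a1 ->] [a2 ->]|i _]; first by exists a0.
- by case: (leP (F a1) (F a2)) => _; [exists a2|exists a1].
- by exists i.
Qed.

Lemma amaxDr (F : A -> R) c (a : A) : amax (fun b => F b + c) = amax F + c.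
Proof.
apply/le_anti/andP; split.
  have [b ->] := amax_attained (fun b => F b + c) a.
  by rewrite lerD2r le_amax.
have [b ->] := amax_attained F a.
exact: (le_amax (fun b => F b + c)).
Qed.

Lemma ler_dist_amax (F G : A -> R) B (a : A) :
  (forall b, `|F b - G b| <= B) -> `|amax F - amax G| <= B.
Proof.
move=> FG; rewrite ler_norml; apply/andP; split.
  have [b ->] := amax_attained G a.
  by have := FG b; have := le_amax F b; rewrite ler_norml; lra.
have [b ->] := amax_attained F a.
by have := FG b; have := le_amax G b; rewrite ler_norml; lra.
Qed.

End FiniteMax.

Lemma avg_near_max (R : realType) (S : finType) (q w : S -> R) (Mx a p : R) u :
  (forall v, 0 <= q v) -> \sum_v q v = 1 -> (forall v, w v <= Mx) ->
  Mx - a <= \sum_v q v * w v -> 0 < p <= q u -> Mx - a / p <= w u.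
Proof.
move=> q0 q1 wM avg /andP[p0 pq].
have qu0 : 0 < q u := lt_le_trans p0 pq.
have avg_le : \sum_v q v * w v <= q u * w u + (1 - q u) * Mx.
  have -> : 1 - q u = \sum_(v | v != u) q v by rewrite -q1 (bigD1 u) //= addrC addrK.
  rewrite (bigD1 u) //= lerD2l mulr_suml.
  by apply: ler_sum => v _; rewrite ler_wpM2l.
have a0 : 0 <= a by have := wM u; nra.
have gap : Mx - w u <= a / q u by rewrite ler_pdivlMr // mulrC; nra.
suff : a / q u <= a / p by lra.
by rewrite ler_wpM2l // lef_pV2 ?posrE.
Qed.

Definition closed_set (R : realType) (S : finType) (M : S -> S -> R) (L : {set S}) :=
  forall s u, s \in L -> 0 < M s u -> u \in L.

Section StochasticMatrix.
Variables (R : realType) (S : finType) (M : S -> S -> R).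
Hypothesis M0 : forall s s', 0 <= M s s'.
Hypothesis M1 : forall s, \sum_s' M s s' = 1.

Lemma mpow_ge0 t s s' : 0 <= mpow M t s s'.
Proof.
elim: t s s' => [|t IH] s s' /=; first by case: eqP.
by apply: sumr_ge0 => u _; rewrite mulr_ge0.
Qed.

Lemma sum_mpow0 (F : S -> R) s : \sum_s' mpow M 0 s s' * F s' = F s.
Proof.
rewrite (bigD1 s) //= eqxx mul1r big1 ?addr0 // => s' /negPf.
by rewrite eq_sym => ->; rewrite mul0r.
Qed.

Lemma mpow_sum1 t s : \sum_s' mpow M t s s' = 1.
Proof.
elim: t s => [|t IH] s.
  by rewrite -[RHS](sum_mpow0 (fun=> 1) s); apply: eq_bigr => s' _; rewrite mulr1.
rewrite /= exchange_big /= -(M1 s); apply: eq_bigr => u _.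
by rewrite -mulr_sumr IH mulr1.
Qed.

Lemma mpowSr t s s' : mpow M t.+1 s s' = \sum_u mpow M t s u * M u s'.
Proof.
elim: t s s' => [|t IH] s s'.
  rewrite sum_mpow0 /= (bigD1 s') //= eqxx mulr1 big1 ?addr0 // => u /negPf.
  by rewrite eq_sym => ->; rewrite mulr0.
rewrite -[LHS]/(\sum_u M s u * mpow M t.+1 u s'); under eq_bigr do rewrite IH mulr_sumr.
rewrite exchange_big /=; apply: eq_bigr => v _.
by rewrite mulr_suml; apply: eq_bigr => u _; rewrite mulrA.
Qed.

Lemma mpow_closed (L : {set S}) :
  closed_set M L -> forall t s s', s \in L -> 0 < mpow M t s s' -> s' \in L.
Proof.
move=> Lcl t s s'; elim: t s => [|t IH] s sL /=; first by case: eqP => [<-|]; rewrite ?ltxx.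
move/gt_eqF/negbT/eqP/psumr_neq0P => [u _|u /andP[_ pos]].
  by rewrite mulr_ge0 ?mpow_ge0.
have Msu : 0 < M s u.
  by rewrite lt_def M0 andbT; apply: contraTneq pos => ->; rewrite mul0r ltxx.
by apply: IH (Lcl _ _ sL Msu) _; rewrite -(pmulr_rgt0 _ Msu).
Qed.

Definition visits N s s' := \sum_(t < N) mpow M t s s'.

Lemma visitsS N s s' :
  visits N.+1 s s' = mpow M 0 s s' + \sum_u M s u * visits N u s'.
Proof.
rewrite /visits big_ord_recl; congr (_ + _).
under [RHS]eq_bigr do rewrite mulr_sumr.
by rewrite exchange_big.
Qed.

Lemma visits_leS N s s' : visits N s s' <= visits N.+1 s s'.
Proof. by rewrite /visits big_ord_recr /= lerDl mpow_ge0. Qed.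

(* Every visit to [s'] from [s] comes after a first visit to [s']. *)
Lemma visits_le_diag N s s' : visits N s s' <= visits N s' s'.
Proof.
elim: N s => [|N IH] s; first by rewrite /visits !big_ord0.
have [->//|ss'] := eqVneq s s'.
rewrite visitsS /= (negPf ss') add0r (le_trans _ (visits_leS N s' s')) //.
rewrite -[leRHS]mul1r -(M1 s) mulr_suml ler_sum // => u _.
by rewrite ler_wpM2l.
Qed.

Lemma sum_visits N s : \sum_s' visits N s s' = N%:R.
Proof.
rewrite /visits exchange_big /=.
by under eq_bigr do rewrite mpow_sum1; rewrite sumr_const card_ord.
Qed.

Lemma closed_set_recurrent (L : {set S}) s0 :
  closed_set M L -> s0 \in L -> exists2 s, s \in L & recurrent M s.
Proof.
move=> Lcl s0L; apply: contrapT => norec.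
have [B HB] : exists B : S -> R, forall s, s \in L -> forall N, visits N s s <= B s.
  apply: (@fin_all_exists _ (fun _ => R) (fun s b => s \in L -> forall N, visits N s s <= b)).
  move=> s; have [sL|] := boolP (s \in L); last by exists 0.
  by apply: contrapT => unbounded; apply: norec; exists s => // -[b hb]; apply: unbounded; exists b.
have visits_bounded N : N%:R <= \sum_s `|B s|.
  rewrite -(sum_visits N s0) ler_sum // => s _.
  have [sL|sL] := boolP (s \in L).
    by rewrite (le_trans (visits_le_diag _ _ _)) // (le_trans (HB _ sL N)) // ler_norm.
  rewrite /visits big1 // => t _; apply/eqP; rewrite eq_le mpow_ge0 andbT leNgt.
  by apply: contraNN sL; apply: mpow_closed.
by have := visits_bounded (Num.truncn (\sum_s `|B s|)).+1; rewrite leNgt truncnS_gt.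
Qed.

Lemma closed_set_max_level (w : S -> R) Mx :
  (forall s, w s <= Mx) -> (forall s, w s = Mx -> Mx <= \sum_s' M s s' * w s') ->
  closed_set M [set s | w s == Mx]%SET.
Proof.
move=> wM wsub s u; rewrite !inE => /eqP ws Msu; rewrite eq_le wM /=.
have := @avg_near_max _ _ (M s) w Mx 0 (M s u) u (M0 s) (M1 s) wM.
by rewrite subr0 mul0r subr0 Msu lexx; apply=> //; apply: wsub.
Qed.

End StochasticMatrix.

Section Kernel.
Variables (R : realType) (S A : finType) (P : S -> A -> S -> R) (r : S -> A -> R).
Hypothesis hP : is_kernel P.

Lemma kernel_ge0 s a s' : 0 <= P s a s'.
Proof. by case: hP. Qed.

Lemma kernel_sum1 s a : \sum_s' P s a s' = 1.
Proof. by case: hP. Qed.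

Lemma kernel_avg_cst s a c : \sum_s' P s a s' * c = c.
Proof. by rewrite -mulr_suml kernel_sum1 mul1r. Qed.

Lemma kernel_avgDr s a (V : S -> R) c :
  \sum_s' P s a s' * (V s' + c) = \sum_s' P s a s' * V s' + c.
Proof. by under eq_bigr do rewrite mulrDr; rewrite big_split /= kernel_avg_cst. Qed.

Lemma kernel_avgB s a (V W : S -> R) :
  \sum_s' P s a s' * (V s' - W s') =
  \sum_s' P s a s' * V s' - \sum_s' P s a s' * W s'.
Proof. by rewrite -sumrB; apply: eq_bigr => s' _; rewrite mulrBr. Qed.

Lemma ler_dist_kernel_avg s a (V W : S -> R) :
  `|\sum_s' P s a s' * V s' - \sum_s' P s a s' * W s'| <= supnorm (fun s' => V s' - W s').
Proof.
rewrite -kernel_avgB (le_trans (ler_norm_sum _ _ _)) //.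
rewrite -[leRHS](kernel_avg_cst s a) ler_sum // => s' _.
by rewrite normrM ger0_norm ?kernel_ge0 // ler_wpM2l ?kernel_ge0 ?ler_supnorm.
Qed.

Lemma qvalDr (V : S -> R) c s a :
  qval P r (fun s' => V s' + c) s a = qval P r V s a + c.
Proof. by rewrite /qval kernel_avgDr addrA. Qed.

Lemma TbDr (V : S -> R) c s (a : A) :
  Tb P r (fun s' => V s' + c) s = Tb P r V s + c.
Proof. by rewrite /Tb -(amaxDr _ _ a); congr amax; apply: funext => b; apply: qvalDr. Qed.

Lemma ler_dist_Tb (V W : S -> R) s (a : A) :
  `|Tb P r V s - Tb P r W s| <= supnorm (fun s' => V s' - W s').
Proof.
apply: (ler_dist_amax a) => b.
by rewrite /qval opprD addrACA subrr add0r ler_dist_kernel_avg.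
Qed.

Lemma exists_greedy (a : A) (V : S -> R) :
  exists d : S -> A, forall s, qval P r V s (d s) = Tb P r V s.
Proof.
apply: (@fin_all_exists _ (fun _ => A) (fun s b => qval P r V s b = Tb P r V s)) => s.
by have [b bmax] := amax_attained (qval P r V s) a; exists b; rewrite /Tb bmax.
Qed.

Lemma modified_bellmanDr (g h : S -> R) c :
  modified_bellman P r g h -> modified_bellman P r g (fun s => h s + c).
Proof.
move=> [g_super [h_bellman [d Hd]]]; split=> //; split => [s|].
  rewrite -addrA [c + _]addrC addrA -h_bellman -(amaxDr _ _ (d s)).
  by congr amax; apply: funext => a; rewrite qvalDr.
by exists d => s; rewrite qvalDr (Hd s).2 (Hd s).1; split=> //; ring.
Qed.

Lemma exists_min_pos_prob :
  exists2 p : R, 0 < p <= 1 & forall s a s', 0 < P s a s' -> p <= P s a s'.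
Proof.
pose pos (x : S * A * S) := 0 < P x.1.1 x.1.2 x.2.
have [x0 x0pos|none] := pickP pos; last first.
  exists 1; first by rewrite ltr01 lexx.
  by move=> s a s' Ppos; have := none (s, a, s'); rewrite /pos Ppos.
have [m mpos mmin] := arg_minP (fun x => P x.1.1 x.1.2 x.2) x0pos.
exists (Num.min (P m.1.1 m.1.2 m.2) 1).
  by rewrite lt_min ltr01 andbT ge_min lexx orbT andbT; exact: mpos.
by move=> s a s' Ppos; rewrite ge_min (mmin (s, a, s')).
Qed.

Lemma Ppi_detpol (d : S -> A) s s' : Ppi P (detpol R d) s s' = P s (d s) s'.
Proof.
rewrite /Ppi (bigD1 (d s)) //= /detpol eqxx mul1r big1 ?addr0 // => a /negPf ->.
by rewrite mul0r.
Qed.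

Lemma detpol_is_policy (d : S -> A) : is_policy (detpol R d).
Proof.
split=> [s a|s]; first by rewrite /detpol; case: eqP.
by rewrite (bigD1 (d s)) //= /detpol eqxx big1 ?addr0 // => a /negPf ->.
Qed.

Lemma Ppi_ge0 pi : is_policy pi -> forall s s', 0 <= Ppi P pi s s'.
Proof. by case=> pi0 _ s s'; apply: sumr_ge0 => a _; rewrite mulr_ge0 ?kernel_ge0. Qed.

Lemma Ppi_sum1 pi : is_policy pi -> forall s, \sum_s' Ppi P pi s s' = 1.
Proof.
case=> _ pi1 s; rewrite /Ppi exchange_big /= -(pi1 s); apply: eq_bigr => a _.
by rewrite -mulr_sumr kernel_sum1 mulr1.
Qed.

Lemma closed_set_detpol (d : S -> A) (L : {set S}) :
  (forall s u, s \in L -> 0 < P s (d s) u -> u \in L) ->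
  closed_set (Ppi P (detpol R d)) L.
Proof. by move=> Lcl s u; rewrite Ppi_detpol; apply: Lcl. Qed.

Lemma closed_set_meet_unichain (d : S -> A) (L1 L2 : {set S}) s1 s2 :
  unichain P ->
  closed_set (Ppi P (detpol R d)) L1 -> closed_set (Ppi P (detpol R d)) L2 ->
  s1 \in L1 -> s2 \in L2 -> exists s, s \in L1 :&: L2.
Proof.
move=> uni L1cl L2cl s1L s2L.
have M0 := Ppi_ge0 (detpol_is_policy d); have M1 := Ppi_sum1 (detpol_is_policy d).
have [u1 u1L rec1] := closed_set_recurrent M0 M1 L1cl s1L.
have [u2 u2L rec2] := closed_set_recurrent M0 M1 L2cl s2L.
have [t acc] := (uni d).2 u2 u1 rec2 rec1.
by exists u1; rewrite inE u1L (mpow_closed M0 L2cl u2L acc).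
Qed.

Lemma modified_bellman_gain_const (g h : S -> R) :
  weakly_communicating P -> modified_bellman P r g h -> exists c, forall s, g s = c.
Proof.
move=> [C [_ [Cacc Ctr]]] [g_super [_ [d Hd]]].
have [s0 _|S0] := pickP (@predT S); last by exists 0 => s; have := S0 s.
have [smin _ gmin] := arg_minP g (isT : predT s0).
have [smax _ gmax] := arg_maxP g (isT : predT s0).
have M0 := Ppi_ge0 (detpol_is_policy d).
have M1 := Ppi_sum1 (detpol_is_policy d).
set Lmin := [set s | - g s == - g smin]%SET.
set Lmax := [set s | g s == g smax]%SET.
have Lmin_closed d' : closed_set (Ppi P (detpol R d')) Lmin.
  have M0' := Ppi_ge0 (detpol_is_policy d').
  have M1' := Ppi_sum1 (detpol_is_policy d').
  apply: (@closed_set_max_level _ _ _ M0' M1' (fun s => - g s)) => [s|s gs].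
    by rewrite lerN2 gmin.
  under eq_bigr do rewrite Ppi_detpol mulrN; rewrite sumrN -gs lerN2 -(g_super s).
  exact: (le_amax (fun a => \sum_s' P s a s' * g s')).
have Lmax_closed : closed_set (Ppi P (detpol R d)) Lmax.
  apply: (@closed_set_max_level _ _ _ M0 M1 g) => [s|s gs]; first exact: gmax.
  by under eq_bigr do rewrite Ppi_detpol; rewrite (Hd s).1 gs.
have rec_in_C s : recurrent (Ppi P (detpol R d)) s -> s \in C.
  by move=> rec; apply: contraT => sC; case: rec; apply: Ctr => //; apply: detpol_is_policy.
have sminL : smin \in Lmin by rewrite inE.
have [c cLmin /rec_in_C cC] := closed_set_recurrent M0 M1 (Lmin_closed d) sminL.
have smaxL : smax \in Lmax by rewrite inE.
have [c' c'Lmax /rec_in_C c'C] := closed_set_recurrent M0 M1 Lmax_closed smaxL.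
have C_Lmin s : s \in C -> s \in Lmin.
  move=> sC; have [d' [t acc]] := Cacc c s cC sC.
  exact: (mpow_closed (Ppi_ge0 (detpol_is_policy d')) (Lmin_closed d') cLmin acc).
exists (g smin) => s; apply/le_anti; rewrite gmin // andbT.
move: (C_Lmin _ c'C) c'Lmax; rewrite !inE eqr_opp => /eqP <- /eqP ->.
exact: gmax.
Qed.

End Kernel.

Lemma lam_ge0 (R : realType) k : 0 <= lam R k.
Proof. by rewrite /lam divr_ge0 // addr_ge0. Qed.

Lemma lam_le1 (R : realType) k : lam R k <= 1.
Proof. by rewrite /lam ler_pdivrMr ?mul1r ?lerDr // ltr_wpDl. Qed.

Lemma lam_le_harmonic (R : realType) k : lam R k <= 2 / (k%:R + 1).
Proof.
rewrite /lam ler_wpM2l // lef_pV2 ?posrE ?ltr_wpDl //.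
by rewrite lerD2l ler1n.
Qed.

Lemma ler_norm_lam_comb (R : realType) k (x y : R) :
  `|lam R k * x + (1 - lam R k) * y| <= lam R k * `|x| + (1 - lam R k) * `|y|.
Proof.
have l0 := lam_ge0 R k; have l1 : 0 <= 1 - lam R k by rewrite subr_ge0 lam_le1.
rewrite (le_trans (ler_normD _ _)) // (normrM (lam R k)) (normrM (1 - lam R k)).
by rewrite (ger0_norm l0) (ger0_norm l1).
Qed.

Section Halpern.
Variables (R : realType) (S : finType) (U : (S -> R) -> S -> R) (h0 hs : S -> R).
Hypothesis U_nonexpansive :
  forall x y, supnorm (fun s => U x s - U y s) <= supnorm (fun s => x s - y s).
Hypothesis U_fix : forall s, U hs s = hs s.

Fixpoint halpern k : S -> R :=
  if k is k'.+1 then fun s => lam R k' * h0 s + (1 - lam R k') * U (halpern k') s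
  else h0.

Let D := supnorm (fun s => h0 s - hs s).

Let D_ge0 : 0 <= D. Proof. exact: supnorm_ge0. Qed.

Lemma ler_dist_U x y s : `|U x s - U y s| <= supnorm (fun s => x s - y s).
Proof. exact: le_trans (ler_supnorm (fun s => U x s - U y s) s) (U_nonexpansive x y). Qed.

Lemma halpern_dist_fix k s : `|halpern k s - hs s| <= D.
Proof.
elim: k s => [|k IH] s; first exact: (ler_supnorm (fun s => h0 s - hs s)).
have h0D : `|h0 s - hs s| <= D := ler_supnorm (fun s => h0 s - hs s) s.
have UD : `|U (halpern k) s - U hs s| <= D.
  exact: le_trans (ler_dist_U _ _ _) (supnorm_le D_ge0 IH).
have -> : halpern k.+1 s - hs s =
    lam R k * (h0 s - hs s) + (1 - lam R k) * (U (halpern k) s - U hs s).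
  by rewrite /= U_fix; ring.
apply: le_trans (ler_norm_lam_comb _ _ _) _.
have l1 : 0 <= 1 - lam R k by rewrite subr_ge0 lam_le1.
by have := ler_wpM2l (lam_ge0 R k) h0D; have := ler_wpM2l l1 UD; lra.
Qed.

Lemma dist_U_halpern_anchor k s : `|U (halpern k) s - h0 s| <= 2 * D.
Proof.
have h0D : `|h0 s - hs s| <= D := ler_supnorm (fun s => h0 s - hs s) s.
have UD : `|U (halpern k) s - hs s| <= D.
  by rewrite -U_fix; apply: le_trans (ler_dist_U _ _ _) (supnorm_le D_ge0 (halpern_dist_fix k)).
have -> : U (halpern k) s - h0 s = (U (halpern k) s - hs s) - (h0 s - hs s) by ring.
by rewrite (le_trans (ler_normB _ _)) // mulr2n mulrDl mul1r lerD.
Qed.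

(* The sharper bound 4kD/((k+1)(k+2)) is what makes the induction go through. *)
Lemma halpern_step_le_sharp k :
  supnorm (fun s => halpern k.+1 s - halpern k s) <=
  4 * k%:R * D / ((k%:R + 1) * (k%:R + 2)).
Proof.
elim: k => [|k IH].
  rewrite mulr0 !mul0r; apply: supnorm_le => // s.
  by rewrite /= /lam add0r divff // mul1r subrr mul0r addr0 subrr normr0.
apply: supnorm_le => [|s]; first by rewrite divr_ge0 ?mulr_ge0 ?addr_ge0.
pose x : R := k%:R; have x0 : 0 <= x by rewrite ler0n.
have kS : k.+1%:R = x + 1 by rewrite -natr1.
have l1 : 1 - lam R k.+1 = (x + 1) / (x + 3) by rewrite /lam kS; field; lra.
have l2 : lam R k - lam R k.+1 = 2 / ((x + 2) * (x + 3)).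
  by rewrite /lam kS; field; lra.
have -> : halpern k.+2 s - halpern k.+1 s =
    (1 - lam R k.+1) * (U (halpern k.+1) s - U (halpern k) s) +
    (lam R k - lam R k.+1) * (U (halpern k) s - h0 s) by rewrite /=; ring.
have p1 : 0 <= (x + 1) / (x + 3) by rewrite divr_ge0 // addr_ge0.
have p2 : 0 <= 2 / ((x + 2) * (x + 3)) by rewrite divr_ge0 // mulr_ge0 // addr_ge0.
rewrite l1 l2 (le_trans (ler_normD _ _)) // (normrM ((x + 1) / (x + 3))).
rewrite (normrM (2 / _)) (ger0_norm p1) (ger0_norm p2).
have step := le_trans (ler_dist_U _ _ s) IH; have start := dist_U_halpern_anchor k s.
rewrite kS; apply: le_trans (lerD (ler_wpM2l p1 step) (ler_wpM2l p2 start)) _.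
by rewrite le_eqVlt; apply/orP; left; apply/eqP; field; lra.
Qed.

Lemma halpern_step_le k :
  supnorm (fun s => halpern k.+1 s - halpern k s) <= 4 * D / (k%:R + 2).
Proof.
apply: le_trans (halpern_step_le_sharp k) _.
pose x : R := k%:R; have x0 : 0 <= x by rewrite ler0n.
have -> : 4 * x * D / ((x + 1) * (x + 2)) = x / (x + 1) * (4 * D / (x + 2)).
  by field; lra.
rewrite ler_piMl ?divr_ge0 ?mulr_ge0 ?addr_ge0 //.
by rewrite ler_pdivrMr ?mul1r ?lerDl // ltr_wpDl.
Qed.

Lemma halpern_residual_le k : (1 <= k)%N ->
  supnorm (fun s => U (halpern k) s - halpern k s) <= 8 / (k%:R + 1) * D.
Proof.
case: k => // k _; apply: supnorm_le => [|s]; first by rewrite mulr_ge0 ?divr_ge0.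
have -> : U (halpern k.+1) s - halpern k.+1 s =
    lam R k * (U (halpern k.+1) s - h0 s) +
    (1 - lam R k) * (U (halpern k.+1) s - U (halpern k) s) by rewrite /=; ring.
apply: le_trans (ler_norm_lam_comb _ _ _) _.
have start := dist_U_halpern_anchor k.+1 s.
have step := le_trans (ler_dist_U _ _ s) (halpern_step_le k).
have l1 : 0 <= 1 - lam R k by rewrite subr_ge0 lam_le1.
apply: le_trans (lerD (ler_wpM2l (lam_ge0 R k) start) (ler_wpM2l l1 step)) _.
pose x : R := k%:R; have x0 : 0 <= x by rewrite ler0n.
have -> : k.+1%:R + 1 = x + 2 by rewrite -natr1 -addrA.
have -> : lam R k * (2 * D) + (1 - lam R k) * (4 * D / (x + 2)) =
    8 / (x + 2) * D - 8 * D / (x + 2) ^+ 2 by rewrite /lam; field; lra.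
by rewrite gerBl // divr_ge0 ?mulr_ge0 ?exprn_ge0 ?addr_ge0.
Qed.

End Halpern.

Lemma limn_inf_dist_le (R : realType) (u : R^o^nat) (l e : R) :
  bounded_fun u ->
  (forall eps, 0 < eps -> \forall n \near \oo, `|u n - l| <= e + eps) ->
  `|limn_inf u - l| <= e.
Proof.
move=> bu ul; have lbu := bounded_fun_has_lbound bu.
have cvg_infs : cvgn (infs u).
  exact: nondecreasing_is_cvgn (nondecreasing_infs lbu) (bounded_fun_has_ubound_infs bu).
rewrite ler_norml lerBrDr lerBlDr; apply/andP; split; apply/ler_addgt0Pr => eps eps0;
  have [N _ uN] := ul eps eps0.
- rewrite -lerBlDr; apply: limr_ge => //.
  near=> n; have Nn : (N <= n)%N by near: n; exists N.
  apply: lb_le_inf => [|_ [m /= nm <-]]; first by exists (u n); exists n => /=.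
  by have := uN m (leq_trans Nn nm); rewrite ler_norml => /andP[]; lra.
- rewrite addrAC; apply: limr_le => //.
  near=> n; have Nn : (N <= n)%N by near: n; exists N.
  apply: le_trans (ge_inf (has_lbound_sdrop lbu n) _) _; first by exists n => /=.
  by have := uN n Nn; rewrite ler_norml => /andP[]; lra.
Unshelve. all: by end_near.
Qed.

Lemma ler_norm_mpow_avg (R : realType) (S : finType) (M : S -> S -> R) t s (x : S -> R) :
  (forall s s', 0 <= M s s') -> (forall s, \sum_s' M s s' = 1) ->
  `|\sum_s' mpow M t s s' * x s'| <= supnorm x.
Proof.
move=> M0 M1; rewrite (le_trans (ler_norm_sum _ _ _)) //.
rewrite -[leRHS]mul1r -(mpow_sum1 M1 t s) mulr_suml ler_sum // => s' _.
by rewrite normrM ger0_norm ?mpow_ge0 // ler_wpM2l ?mpow_ge0 ?ler_supnorm.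
Qed.

Section Gain.
Variables (R : realType) (S A : finType) (P : S -> A -> S -> R) (r : S -> A -> R).
Hypothesis hP : is_kernel P.
Variables (pi : S -> A -> R) (h : S -> R).
Hypothesis pi_policy : is_policy pi.
Hypothesis pi_greedy : Tpi P r pi h = Tb P r h.

Let M := Ppi P pi.
Let M0 := Ppi_ge0 hP pi_policy.
Let M1 := Ppi_sum1 hP pi_policy.

Lemma exp_return_telescope T s :
  exp_return P r pi T s =
  \sum_(t < T) \sum_s' mpow M t s s' * (Tb P r h s' - h s')
  + h s - \sum_s' mpow M T s s' * h s'.
Proof.
elim: T => [|T IH]; first by rewrite /exp_return !big_ord0 sum_mpow0 add0r subrr.
rewrite /exp_return big_ord_recr /= -/(exp_return P r pi T s) IH big_ord_recr /=.
suff -> : \sum_s' mpow M T s s' * rpi r pi s' =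
    \sum_s' mpow M T s s' * (Tb P r h s' - h s') + \sum_s' mpow M T s s' * h s'
    - \sum_s' mpow M T.+1 s s' * h s' by ring.
have -> : \sum_s' mpow M T.+1 s s' * h s' =
          \sum_s' mpow M T s s' * \sum_u M s' u * h u.
  under eq_bigr do rewrite mpowSr mulr_suml.
  rewrite exchange_big /=; apply: eq_bigr => u _; rewrite mulr_sumr.
  by apply: eq_bigr => v _; rewrite mulrA.
rewrite -big_split -sumrB /=; apply: eq_bigr => s' _.
by rewrite -[in RHS]pi_greedy /Tpi; ring.
Qed.

Lemma avg_return_dist_le g T s : (0 < T)%N ->
  `|T%:R^-1 * exp_return P r pi T s - g| <=
  supnorm (fun s => Tb P r h s - h s - g) + 2 * supnorm h / T%:R.
Proof.
move=> T0; have T0' : 0 < T%:R :> R by rewrite ltr0n.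
set e := supnorm _.
set V := \sum_(t < T) (\sum_s' mpow M t s s' * (Tb P r h s' - h s') - g).
set W := h s - \sum_s' mpow M T s s' * h s'.
have -> : T%:R^-1 * exp_return P r pi T s - g = T%:R^-1 * (V + W).
  rewrite exp_return_telescope /V /W sumrB sumr_const card_ord -mulr_natl.
  by field; rewrite gt_eqF.
have V_le : `|V| <= T%:R * e.
  have -> : T%:R * e = \sum_(t < T) e by rewrite sumr_const card_ord mulr_natl.
  rewrite (le_trans (ler_norm_sum _ _ _)) // ler_sum // => t _.
  rewrite -[g](mulr1) -(mpow_sum1 M1 t s) mulr_sumr -sumrB.
  under eq_bigr do rewrite [g * _]mulrC -mulrBr.
  exact: ler_norm_mpow_avg.
have W_le : `|W| <= 2 * supnorm h.
  rewrite (le_trans (ler_normB _ _)) // mulr2n mulrDl mul1r lerD ?ler_supnorm //.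
  exact: ler_norm_mpow_avg.
have Ti0 : 0 <= T%:R^-1 :> R by rewrite invr_ge0 ltW.
rewrite normrM ger0_norm //.
apply: le_trans (ler_wpM2l Ti0 (le_trans (ler_normD _ _) (lerD V_le W_le))) _.
by rewrite mulrDr mulrA mulVf ?gt_eqF // mul1r lerD2l mulrC.
Qed.

Lemma gain_dist_le g s :
  `|gain P r pi s - g| <= supnorm (fun s => Tb P r h s - h s - g).
Proof.
set e := supnorm _; set K := 2 * supnorm h.
have K0 : 0 <= K by rewrite mulr_ge0 ?supnorm_ge0.
have avg_le T : (0 < T)%N ->
    `|T%:R^-1 * exp_return P r pi T s - g| <= e + K / T%:R.
  exact: avg_return_dist_le.
apply: limn_inf_dist_le => [|eps eps0].
  rewrite /bounded_near; near=> B => -[|T] _ /=.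
    by rewrite invr0 mul0r normr0; near: B; apply: nbhs_pinfty_ge; rewrite num_real.
  apply: le_trans (_ : e + K + `|g| <= B); last first.
    by near: B; apply: nbhs_pinfty_ge; rewrite num_real.
  have KT : K / T.+1%:R <= K by rewrite ler_pdivrMr ?ltr0Sn // ler_peMr // ler1n.
  have := avg_le T.+1 isT; have := ler_normD (T.+1%:R^-1 * exp_return P r pi T.+1 s - g) g.
  by rewrite subrK; move: KT; move: (T.+1%:R^-1 * _) (K / _) => u k; lra.
near=> T; have T0 : (0 < T)%N by near: T; exact: nbhs_infty_gt.
apply: le_trans (avg_le T T0) _; rewrite lerD2l ler_pdivrMr ?ltr0n // -ler_pdivrMl //.
by near: T; exact: nbhs_infty_ger.
Unshelve. all: by end_near.
Qed.

End Gain.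

Lemma subset_chain_stable (T : finType) (L : nat -> {set T}) :
  (forall j, L j \subset L j.+1) -> exists2 j, (j <= #|T|)%N & L j.+1 \subset L j.
Proof.
move=> Lincr; apply: contrapT => unstable.
have card_ge j : (j <= #|T|.+1)%N -> (j <= #|L j|)%N.
  elim: j => // j IH jT; apply: leq_ltn_trans (IH (ltnW jT)) (proper_card _).
  rewrite properE Lincr /=; apply/negP => stable.
  by apply: unstable; exists j.
by have := card_ge _ (leqnn _); rewrite leqNgt ltnS max_card.
Qed.

Section Span.
Variables (R : realType) (S A : finType) (P : S -> A -> S -> R).
Hypothesis hP : is_kernel P.
Variable p : R.
Hypotheses (p_gt0 : 0 < p) (p_le1 : p <= 1).
Hypothesis p_min : forall s a s', 0 < P s a s' -> p <= P s a s'.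

Fixpoint span_factor j : R := if j is j'.+1 then (span_factor j' + 1) / p else 0.

Lemma span_factor_ge0 j : 0 <= span_factor j.
Proof. by elim: j => //= j IH; rewrite divr_ge0 ?addr_ge0 ?(ltW p_gt0). Qed.

Lemma nondecreasing_span_factor : nondecreasing_seq span_factor.
Proof.
apply/nondecreasing_seqP => j /=.
rewrite ler_pdivlMr //; have := span_factor_ge0 j.
by move: (span_factor j) => x x0; rewrite (le_trans (ler_piMr x0 p_le1)) // lerDl.
Qed.

Variables (w : S -> R) (eta : R) (d1 d2 : S -> A).
Hypothesis eta_ge0 : 0 <= eta.
Hypothesis w_sub : forall s, w s <= \sum_s' P s (d1 s) s' * w s' + eta.
Hypothesis w_super : forall s, \sum_s' P s (d2 s) s' * w s' - eta <= w s.

Lemma span_factorS_eta j : (span_factor j * eta + eta) / p = span_factor j.+1 * eta.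
Proof. by rewrite /=; field; rewrite gt_eqF. Qed.

Lemma upper_level_step Mx j s u : (forall v, w v <= Mx) ->
  Mx - span_factor j * eta <= w s -> 0 < P s (d1 s) u ->
  Mx - span_factor j.+1 * eta <= w u.
Proof.
move=> wM ws Psu; rewrite -span_factorS_eta.
apply: (avg_near_max (kernel_ge0 hP s (d1 s)) (kernel_sum1 hP s (d1 s)) wM).
  by have := w_sub s; lra.
by rewrite p_gt0 p_min.
Qed.

Lemma lower_level_step mn j s u : (forall v, mn <= w v) ->
  w s <= mn + span_factor j * eta -> 0 < P s (d2 s) u ->
  w u <= mn + span_factor j.+1 * eta.
Proof.
move=> wm ws Psu; rewrite -span_factorS_eta -lerN2 opprD.
apply: (avg_near_max (w := fun v => - w v) (kernel_ge0 hP s (d2 s)) (kernel_sum1 hP s (d2 s))).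
- by move=> v; rewrite lerN2.
- under eq_bigr do rewrite mulrN; rewrite sumrN; have := w_super s; lra.
- by rewrite p_gt0 p_min.
Qed.

Definition upper_set Mx j := [set s | Mx - span_factor j * eta <= w s]%SET.
Definition lower_set mn j := [set s | w s <= mn + span_factor j * eta]%SET.

Lemma upper_set_incr Mx j : upper_set Mx j \subset upper_set Mx j.+1.
Proof.
apply/fintype.subsetP => s; rewrite !inE; apply: le_trans.
by rewrite lerB // ler_wpM2r // nondecreasing_span_factor.
Qed.

Lemma lower_set_incr mn j : lower_set mn j \subset lower_set mn j.+1.
Proof.
apply/fintype.subsetP => s; rewrite !inE => /le_trans; apply.
by rewrite lerD // ler_wpM2r // nondecreasing_span_factor.
Qed.

Lemma upper_set_closed Mx j (d : S -> A) :
  (forall v, w v <= Mx) -> upper_set Mx j.+1 \subset upper_set Mx j ->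
  {in upper_set Mx j, forall s, d s = d1 s} ->
  closed_set (Ppi P (detpol R d)) (upper_set Mx j).
Proof.
move=> wM stable dE; apply: closed_set_detpol => s u sU; rewrite dE // => Psu.
apply: (fintype.subsetP stable); rewrite inE; apply: upper_level_step Psu => //.
by move: sU; rewrite inE.
Qed.

Lemma lower_set_closed mn j (d : S -> A) :
  (forall v, mn <= w v) -> lower_set mn j.+1 \subset lower_set mn j ->
  {in lower_set mn j, forall s, d s = d2 s} ->
  closed_set (Ppi P (detpol R d)) (lower_set mn j).
Proof.
move=> wm stable dE; apply: closed_set_detpol => s u sL; rewrite dE // => Psu.
apply: (fintype.subsetP stable); rewrite inE; apply: lower_level_step Psu => //.
by move: sL; rewrite inE.
Qed.

(* Were the span larger, the policy playing [d1] above the mid-level and [d2]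
   below it would have two disjoint closed sets, contradicting unichain. *)
Lemma span_le : unichain P -> forall s1 s2, w s1 - w s2 <= 2 * span_factor #|S| * eta.
Proof.
move=> uni s1 s2.
have [smax _ wmax] := arg_maxP w (isT : predT s1).
have [smin _ wmin] := arg_minP w (isT : predT s1).
have wM v : w v <= w smax := wmax v isT.
have wm v : w smin <= w v := wmin v isT.
set Mx := w smax in wM *; set mn := w smin in wm *.
set K := span_factor #|S| * eta.
suff : Mx - mn <= 2 * K by rewrite -mulrA -/K; have := wM s1; have := wm s2; lra.
rewrite leNgt; apply/negP => wide.
pose th := (Mx + mn) / 2.
have small j : (j <= #|S|)%N -> 0 <= span_factor j * eta <= K.
  by move=> jS; rewrite mulr_ge0 ?span_factor_ge0 // ler_wpM2r // nondecreasing_span_factor.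
have above j s : (j <= #|S|)%N -> s \in upper_set Mx j -> th <= w s.
  by move=> /small /andP[c0 cK]; rewrite inE /th; lra.
have below j s : (j <= #|S|)%N -> s \in lower_set mn j -> w s < th.
  by move=> /small /andP[c0 cK]; rewrite inE /th; lra.
pose d s := if th <= w s then d1 s else d2 s.
have [j jS Up_stable] := subset_chain_stable (upper_set_incr Mx).
have [j' j'S Down_stable] := subset_chain_stable (lower_set_incr mn).
have Up_closed : closed_set (Ppi P (detpol R d)) (upper_set Mx j).
  by apply: upper_set_closed => // s /(above j s jS) sU; rewrite /d sU.
have Down_closed : closed_set (Ppi P (detpol R d)) (lower_set mn j').
  by apply: lower_set_closed => // s /(below j' s j'S); rewrite /d leNgt => ->.
have smax_Up : smax \in upper_set Mx j by rewrite inE gerBl mulr_ge0 ?span_factor_ge0.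
have smin_Down : smin \in lower_set mn j' by rewrite inE lerDl mulr_ge0 ?span_factor_ge0.
have [s] := closed_set_meet_unichain hP uni Up_closed Down_closed smax_Up smin_Down.
by rewrite inE => /andP[/(above j s jS) + /(below j' s j'S)]; rewrite ltNge => ->.
Qed.

End Span.

Lemma cvg0_harmonic_bound (R : realType) (u : R^o^nat) (C : R) :
  (forall k, (0 < k)%N -> `|u k| <= C / (k%:R + 1)) -> u @ \oo --> 0.
Proof.
move=> uC; apply/cvgrPdist_le => eps eps0; near=> k.
have k0 : (0 < k)%N by near: k; exact: nbhs_infty_gt.
have Ck : C / eps <= k%:R by near: k; exact: nbhs_infty_ger.
rewrite sub0r normrN (le_trans (uC k k0)) // ler_pdivrMr ?ltr_wpDl //.
by rewrite -ler_pdivrMl //; lra.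
Unshelve. all: by end_near.
Qed.

Lemma lam_cvg0 (R : realType) : lam R k @[k --> \oo] --> (0 : R^o).
Proof.
apply: (@cvg0_harmonic_bound _ _ 2) => k _.
by rewrite ger0_norm ?lam_ge0 ?lam_le_harmonic.
Qed.

Lemma cont_fun_cvg (R : realType) (S : finType) (f : (S -> R) -> R)
    (x : nat -> S -> R) (x0 : S -> R) :
  cont_fun f -> supnorm (fun s => x k s - x0 s) @[k --> \oo] --> (0 : R^o) ->
  f (x k) @[k --> \oo] --> (f x0 : R^o).
Proof.
move=> f_cont x_cvg; apply/cvgrPdist_lt => eps eps0.
have [delta delta0 fx0] := f_cont x0 eps eps0.
near=> k; rewrite distrC fx0 // -[ltLHS]ger0_norm ?supnorm_ge0 //.
by near: k; exact: cvgr0_norm_lt x_cvg _ delta0.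
Unshelve. all: by end_near.
Qed.

Section ARVI.
Variables (R : realType) (S A : finType) (P : S -> A -> S -> R) (r : S -> A -> R).
Variables (f : (S -> R) -> R) (h0 hstar : S -> R) (g : R) (d : S -> A).
Hypothesis hP : is_kernel P.
Hypothesis f_shift : forall (x : S -> R) (c : R), f (fun s => x s + c) = f x + c.
Hypothesis hstar_bellman : forall s, Tb P r hstar s = hstar s + g.

Definition Tg (y : S -> R) s := Tb P r y s - g.

Lemma Tg_nonexpansive x y :
  supnorm (fun s => Tg x s - Tg y s) <= supnorm (fun s => x s - y s).
Proof.
apply: supnorm_le => [|s]; first exact: supnorm_ge0.
by rewrite /Tg opprB addrA subrK (ler_dist_Tb _ hP _ _ _ (d s)).
Qed.

Lemma Tg_fix s : Tg hstar s = hstar s.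
Proof. by rewrite /Tg hstar_bellman addrK. Qed.

Local Notation y := (halpern Tg h0).

Definition arvi_offset k := if k is k'.+1 then (1 - lam R k') * (g - f (y k')) else 0.

Lemma arviE k s : arvi P r f h0 k s = y k s + arvi_offset k.
Proof.
elim: k s => [|k IH] s; first by rewrite addr0.
have E : arvi P r f h0 k = fun s => y k s + arvi_offset k by apply: funext.
by rewrite /= E (TbDr _ hP _ _ _ (d s)) f_shift /Tg /=; ring.
Qed.

Lemma arvi_residualE k s :
  Tb P r (arvi P r f h0 k) s - arvi P r f h0 k s - g = Tg (y k) s - y k s.
Proof.
have -> : arvi P r f h0 k = fun s => y k s + arvi_offset k by apply: funext => s'; apply: arviE.
by rewrite (TbDr _ hP _ _ _ (d s)) /Tg; ring.
Qed.

Lemma arvi_residual_le k : (1 <= k)%N ->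
  supnorm (fun s => Tb P r (arvi P r f h0 k) s - arvi P r f h0 k s - g)
  <= 8 / (k%:R + 1) * supnorm (fun s => h0 s - hstar s).
Proof.
move=> k1; under eq_fun do rewrite arvi_residualE.
exact (halpern_residual_le h0 Tg_nonexpansive Tg_fix k1).
Qed.

Hypothesis hstar_qval : forall s, qval P r hstar s (d s) = hstar s + g.
Hypothesis uni : unichain P.
Hypothesis f_cont : cont_fun f.
Variable p : R.
Hypotheses (p_gt0 : 0 < p) (p_le1 : p <= 1).
Hypothesis p_min : forall s a s', 0 < P s a s' -> p <= P s a s'.

Local Notation D := (supnorm (fun s => h0 s - hstar s)).
Local Notation eta k := (supnorm (fun s => Tg (y k) s - y k s)).
Local Notation Kspan := (2 * span_factor p #|S|).

Lemma halpern_span k s1 s2 :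
  (y k s1 - hstar s1) - (y k s2 - hstar s2) <= Kspan * eta k.
Proof.
have [d1 d1_greedy] := exists_greedy P r (d s1) (y k).
apply: (span_le hP p_gt0 p_le1 p_min (w := fun s => y k s - hstar s) (eta := eta k)
  (d1 := d1) (d2 := d)) => // [|s|s].
- exact: supnorm_ge0.
- have := ler_supnorm (fun s => Tg (y k) s - y k s) s.
  have := le_amax (qval P r hstar s) (d1 s); rewrite -/(Tb P r hstar s) hstar_bellman.
  rewrite /Tg -d1_greedy /qval kernel_avgB // ler_norml => h_le /andP[res_le _].
  lra.
- have := ler_supnorm (fun s => Tg (y k) s - y k s) s.
  have := le_amax (qval P r (y k) s) (d s); have := hstar_qval s.
  rewrite /Tg -/(Tb P r (y k) s) /qval kernel_avgB // ler_norml => h_eq y_le /andP[_ res_le].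
  lra.
Qed.

Variable s0 : S.

(* [y k - hstar] is the constant [lvl k] plus the deviation [dev k], which
   vanishes at [s0] and whose span is controlled by [halpern_span]. *)
Local Notation lvl k := (y k s0 - hstar s0).
Local Notation dev k := (fun s => y k s - hstar s - lvl k).
Local Notation F k := (f (fun s => hstar s + dev k s)).

Lemma supnorm_dev_cvg0 : supnorm (dev k) @[k --> \oo] --> (0 : R^o).
Proof.
have Kspan0 : 0 <= Kspan by rewrite mulr_ge0 ?span_factor_ge0.
apply: (@cvg0_harmonic_bound _ _ (Kspan * 8 * D)) => k k0.
rewrite ger0_norm ?supnorm_ge0 //.
apply: le_trans (_ : supnorm (dev k) <= Kspan * eta k) _.
  apply: supnorm_le => [|s]; first by rewrite mulr_ge0 ?supnorm_ge0.
  by rewrite ler_norml; have := halpern_span k s s0; have := halpern_span k s0 s; lra.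
apply: le_trans (ler_wpM2l Kspan0 (halpern_residual_le h0 Tg_nonexpansive Tg_fix k0)) _.
by rewrite !mulrA mulrAC.
Qed.

Lemma f_dev_cvg : F k @[k --> \oo] --> (f hstar : R^o).
Proof.
apply: cont_fun_cvg => //.
have E k : supnorm (fun s => hstar s + dev k s - hstar s) = supnorm (dev k).
  by congr supnorm; apply: funext => s; rewrite addrC addKr.
by under eq_fun do rewrite E; exact: supnorm_dev_cvg0.
Qed.

Lemma lvl_step_cvg0 : (lvl k.+1 - lvl k) @[k --> \oo] --> (0 : R^o).
Proof.
apply: (@cvg0_harmonic_bound _ _ (4 * D)) => k _.
rewrite opprB addrA subrK (le_trans (ler_supnorm (fun s => y k.+1 s - y k s) s0)) //.
apply: le_trans (halpern_step_le h0 Tg_nonexpansive Tg_fix k) _.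
rewrite ler_wpM2l ?mulr_ge0 ?supnorm_ge0 // lef_pV2 ?posrE ?ltr_wpDl //.
by rewrite lerD2l ler1n.
Qed.

Lemma lam_lvl_cvg0 : (lam R k * lvl k) @[k --> \oo] --> (0 : R^o).
Proof.
apply: (@cvg0_harmonic_bound _ _ (2 * D)) => k _.
have tD := halpern_dist_fix h0 Tg_nonexpansive Tg_fix k s0.
rewrite normrM ger0_norm ?lam_ge0 //.
apply: le_trans (ler_pM (lam_ge0 R k) (normr_ge0 _) (lam_le_harmonic R k) tD) _.
by rewrite mulrAC.
Qed.

Local Notation err k :=
  ((lvl k.+1 - lvl k) - (F k - f hstar) - lam R k * (g - F k) + lam R k * lvl k).

Lemma err_cvg0 : err k @[k --> \oo] --> (0 : R^o).
Proof.
have F_sub : F k - f hstar @[k --> \oo] --> (0 : R^o).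
  by apply/subr_cvg0; exact: f_dev_cvg.
have lam_gF : lam R k * (g - F k) @[k --> \oo] --> (0 : R^o).
  rewrite -(mul0r (g - f hstar)).
  exact: cvgM (@lam_cvg0 R) (cvgB (cvg_cst _) f_dev_cvg).
have := cvgD (cvgB (cvgB lvl_step_cvg0 F_sub) lam_gF) lam_lvl_cvg0.
by rewrite !subr0 addr0; apply.
Qed.

Lemma f_halpernE k : f (y k) = F k + lvl k.
Proof. by rewrite -f_shift; congr f; apply: funext => s; ring. Qed.

Lemma arvi_succ_subE k : arvi P r f h0 k.+1 s0 - (hstar s0 + (g - f hstar)) = err k.
Proof. by rewrite arviE [arvi_offset _]/= f_halpernE; ring. Qed.

Lemma f_arvi_succ_subE k : f (arvi P r f h0 k.+1) - g = (F k.+1 - f hstar) + err k.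
Proof.
have -> : arvi P r f h0 k.+1 = fun s => y k.+1 s + arvi_offset k.+1.
  by apply: funext => s; apply: arviE.
by rewrite f_shift [arvi_offset _]/= !f_halpernE; ring.
Qed.

Lemma arvi_cvg : arvi P r f h0 k s0 @[k --> \oo] --> (hstar s0 + (g - f hstar) : R^o).
Proof.
rewrite -(cvg_shiftS (fun k => arvi P r f h0 k s0 : R^o)); apply/subr_cvg0.
by under eq_fun do rewrite /= arvi_succ_subE; exact: err_cvg0.
Qed.

Lemma f_arvi_cvg : f (arvi P r f h0 k) @[k --> \oo] --> (g : R^o).
Proof.
rewrite -(cvg_shiftS (fun k => f (arvi P r f h0 k) : R^o)); apply/subr_cvg0.
under eq_fun do rewrite /= f_arvi_succ_subE.
have F_sub : F k.+1 - f hstar @[k --> \oo] --> (0 : R^o).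
  by rewrite (cvg_shiftS (fun k => F k - f hstar : R^o)); apply/subr_cvg0; exact: f_dev_cvg.
by have := cvgD F_sub err_cvg0; rewrite addr0; apply.
Qed.

End ARVI.

Theorem theorem6 (R : realType) (S A : finType)
  (P : S -> A -> S -> R) (r : S -> A -> R)
  (gstar hstar : S -> R) (f : (S -> R) -> R) (h0 : S -> R)
  (pi : nat -> S -> A -> R) :
  is_kernel P ->
  weakly_communicating P ->
  modified_bellman P r gstar hstar ->
  cont_fun f ->
  (forall (x : S -> R) (c : R), f (fun s => x s + c) = f x + c) ->
  (forall k, is_policy (pi k)) ->
  (forall k, Tpi P r (pi k) (arvi P r f h0 k) = Tb P r (arvi P r f h0 k)) ->
  (forall k, (1 <= k)%N ->
     supnorm (fun s => gstar s - gain P r (pi k) s)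
       <= supnorm (fun s => Tb P r (arvi P r f h0 k) s - arvi P r f h0 k s - gstar s)
     /\ supnorm (fun s => Tb P r (arvi P r f h0 k) s - arvi P r f h0 k s - gstar s)
       <= 8 / (k%:R + 1) * supnorm (fun s => h0 s - hstar s))
  /\
  (unichain P ->
     exists hinf : S -> R,
       modified_bellman P r gstar hinf /\
       (forall s, (fun k => arvi P r f h0 k s) @ \oo --> (hinf s : R^o)) /\
       (forall s, (fun k => f (arvi P r f h0 k)) @ \oo --> (gstar s : R^o))).
Proof.
move=> hP wc mb f_cont f_shift pi_policy pi_greedy.
have [g /funext gstarE] := modified_bellman_gain_const hP wc mb; subst gstar.
have [_ [hstar_bellman [d Hd]]] := mb.
have hstar_qval s : qval P r hstar s (d s) = hstar s + g := (Hd s).2.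
split=> [k k1|uni].
  split; last exact: (arvi_residual_le h0 d hP f_shift hstar_bellman k1).
  apply: supnorm_le => [|s]; first exact: supnorm_ge0.
  by rewrite distrC (gain_dist_le hP (pi_policy k) (pi_greedy k)).
have [p /andP[p_gt0 p_le1] p_min] := exists_min_pos_prob P.
exists (fun s => hstar s + (g - f hstar)); split; first exact: modified_bellmanDr.
split=> s.
  exact: (arvi_cvg h0 hP f_shift hstar_bellman hstar_qval uni f_cont p_gt0 p_le1 p_min).
exact: (f_arvi_cvg h0 hP f_shift hstar_bellman hstar_qval uni f_cont p_gt0 p_le1 p_min s).
Qed.
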